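(* Let $R=(r_{st})$ be an $n\times n$ matrix over the complex numbers ($n\ge 2$). For $1\le i,j\le n$ let $R_{ij}$ be the matrix obtained from $R$ by replacing the $(i,j)$ entry by $0$ (all other entries unchanged). Let $l$ be the number of nonzero entries of $R$. Then $$(l-n)\,d_2(R)=\sum_{(i,j)\in I} d_2(R_{ij}),$$ where $I=\{(i,j): r_{ij}\ne 0,\ 1\le i,j\le n\}$.
   Context: For an $n\times n$ matrix $M=(m_{ij})$ ($n\ge 2$), the second immanant is $d_2(M)=\sum_{\sigma\in S_n}\chi_2(\sigma)\prod_{s=1}^n m_{s\sigma(s)}$, where $\chi_2$ is the irreducible character of the symmetric group $S_n$ corresponding to the partition $(2,1^{n-2})$. *)

From HB Require Import structures.
From mathcomp Require Import all_boot all_order all_algebra all_fingroup.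
Set Implicit Arguments. Unset Strict Implicit. Unset Printing Implicit Defensive.
Import GRing.Theory Num.Theory.
Local Open Scope ring_scope.

(* chi2 s : value at s of the irreducible character of S_n for the
   partition (2,1^(n-2)), i.e. sign(s) * (number of fixed points of s - 1)
   (the standard character (n-1,1) tensored with the sign character). *)
Definition chi2 (R : comRingType) (n : nat) (s : 'S_n) : R :=
  (-1) ^+ s * (#|[set i : 'I_n | s i == i]|%:R - 1).

Definition d2 (R : comRingType) (n : nat) (M : 'M[R]_n) : R :=
  \sum_(s : 'S_n) chi2 R s * \prod_(i < n) M i (s i).

Definition zero_entry (R : comRingType) (n : nat) (M : 'M[R]_n) (i j : 'I_n)
  : 'M[R]_n :=
  \matrix_(s, t) (if (s == i) && (t == j) then 0 else M s t).

Definition nz_support (R : comRingType) (n : nat) (M : 'M[R]_n)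
  : {set 'I_n * 'I_n} :=
  [set p : 'I_n * 'I_n | M p.1 p.2 != 0].

(* Expand both sides over permutations and compare the coefficients of each
   sigma.  Zeroing the entry (i, j) kills the product of the entries
   (k, sigma k) exactly when (i, j) lies on the graph of sigma, and leaves it
   unchanged otherwise.  When that product is nonzero, its n positions all lie
   in the support, so summing over the l support positions gives (l - n) times
   the product.  Neither the character values, nor n >= 2, nor anything about
   the coefficient field beyond commutativity is needed. *)

From HB Require Import structures.
From mathcomp Require Import all_boot all_order all_algebra all_fingroup.
Import GRing.Theory.
Local Open Scope ring_scope.

Section PermGraph.

Variables (R : comRingType) (n : nat).
Implicit Types (M : 'M[R]_n) (s : 'S_n) (p : 'I_n * 'I_n).

Definition perm_graph s : {set 'I_n * 'I_n} := [set (i, s i) | i : 'I_n].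

Lemma mem_perm_graph s p : (p \in perm_graph s) = (p.2 == s p.1).
Proof.
case: p => i j /=; apply/imsetP/eqP => [[k _ [-> ->]] // | ->].
by exists i.
Qed.

Lemma card_perm_graph s : #|perm_graph s| = n.
Proof. by rewrite card_imset ?card_ord // => i j []. Qed.

Lemma prod_zero_entry M s p :
  \prod_(i < n) zero_entry M p.1 p.2 i (s i)
    = if p \in perm_graph s then 0 else \prod_(i < n) M i (s i).
Proof.
rewrite mem_perm_graph; have [graph_p | off_graph] := eqVneq p.2 (s p.1).
  by rewrite (bigD1 p.1) //= mxE eqxx -graph_p eqxx mul0r.
apply: eq_bigr => i _; rewrite mxE.
by case: eqVneq => [-> | //]; rewrite eq_sym (negbTE off_graph).
Qed.

Lemma perm_graph_sub_nz_support M s :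
  \prod_(i < n) M i (s i) != 0 -> perm_graph s \subset nz_support M.
Proof.
move=> prod_nz; apply/subsetP => p; rewrite mem_perm_graph inE => /eqP ->.
apply: contra prod_nz => /eqP entry0.
by rewrite (bigD1 p.1) //= entry0 mul0r.
Qed.

Lemma sum_nz_support_prod_zero_entry M s :
  \sum_(p in nz_support M) \prod_(i < n) zero_entry M p.1 p.2 i (s i)
    = (#|nz_support M|%:R - n%:R) * \prod_(i < n) M i (s i).
Proof.
under eq_bigr => p _ do rewrite prod_zero_entry.
set P := \prod_(i < n) M i (s i).
have [-> | P_nz] := eqVneq P 0.
  by rewrite mulr0; apply: big1 => p _; case: ifP.
have graph_sub := perm_graph_sub_nz_support M s P_nz.
rewrite (big_setID (perm_graph s)) /= big1 ?add0r; last first.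
  by move=> p /setIP [_ ->].
rewrite (eq_bigr (fun _ => P)); last by move=> p /setDP [_ /negbTE ->].
rewrite sumr_const cardsD (setIidPr graph_sub) card_perm_graph.
rewrite -natrB ?mulr_natl //.
by rewrite -[X in (X <= _)%N](card_perm_graph s) subset_leq_card.
Qed.

End PermGraph.

Theorem corollary3p4 (C : numClosedFieldType) (n : nat) (hn : (2 <= n)%N)
    (R : 'M[C]_n) :
  ((#|nz_support R|)%:R - n%:R) * d2 R
    = \sum_(p in nz_support R) d2 (zero_entry R p.1 p.2).
Proof.
rewrite /d2 exchange_big /= mulr_sumr; apply: eq_bigr => s _.
by rewrite -mulr_sumr sum_nz_support_prod_zero_entry mulrCA.
Qed.
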